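(* Let $S$ be an $E$-solid locally inverse semigroup, $\rho$ an inverse semigroup congruence on $S$ whose idempotent classes are completely simple subsemigroups, $T=S/\rho$, and $\mathcal C$ the derived semigroupoid. For an arrow $a$ of $\mathcal C$ let $\widehat a$ denote the unique stable arrow $b$ with $b\le a$. Then for any arrows $a,b$ of $\mathcal C$ with $\omega(a)=\alpha(b)$: (1) $\widehat{\widehat a}=\widehat a$; (2) $\widehat{a\circ b}=\widehat a\circ\widehat b$; (3) $\widehat{(b\curlywedge a)}=(\widehat b\curlywedge\widehat a)$.
   Context: The derived semigroupoid $\mathcal C$ has object set $T$ and arrows $\mathcal C(\alpha,\beta)=\{(\alpha,s,\beta)\in T\times S\times T:\alpha\cdot s\rho=\beta,\ \beta\cdot(s\rho)^{-1}=\alpha\}$; for $a=(\alpha,s,\beta)$, $\alpha(a)=\alpha$, $\omega(a)=\beta$; composition $(\alpha,s,\beta)\circ(\beta,t,\gamma)=(\alpha,st,\gamma)$. An arrow $(\alpha,s,\beta)$ is stable if $s\rho=\alpha^{-1}\beta$. Natural partial order on $\mathcal C$: $(\alpha,s,\beta)\le(\gamma,t,\delta)$ iff $\alpha=\gamma$, $\beta=\delta$ and $s\le t$ in the natural partial order of $S$ (it is known that each arrow $a$ has a unique stable $b\le a$). Inverses of $(\alpha,s,\beta)$ are $(\beta,s^*,\alpha)$ with $s^*$ an inverse of $s$ in $S$. Each loop semigroup $\mathcal C(\gamma,\gamma)$ is locally inverse, so sandwich sets $S(e,f)=\{g\text{ idempotent}: g\circ e=g=f\circ g,\ e\circ g\circ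 f=e\circ f\}$ are singletons; for arrows $b,a$ with $\alpha(b)=\omega(a)$, $(b\curlywedge a)$ is the unique element of $S(a'\circ a,\ b\circ b')$ for any inverses $a',b'$ of $a,b$. Locally inverse: regular with every $eSe$ inverse; $E$-solid: idempotent-generated subsemigroup completely regular. *)

From Stdlib Require Import Classical.

Set Implicit Arguments.

Record semigroup := Semigroup {
  car :> Type;
  op : car -> car -> car;
  opA : forall x y z, op x (op y z) = op (op x y) z }.

Arguments op {s} _ _.

Section SemigroupDefs.
Variable S : semigroup.

Definition idem (e : S) : Prop := op e e = e.

Definition inverse_of (x y : S) : Prop := op (op x y) x = x /\ op (op y x) y = y.

Definition regular : Prop := forall x : S, exists y, inverse_of x y.

Definition inverse_on (P : S -> Prop) : Prop :=
  forall x, P x -> exists! y, P y /\ inverse_of x y.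

Definition inverse_semigroup : Prop := inverse_on (fun _ => True).

Definition local_sub (e : S) (x : S) : Prop := exists s, x = op (op e s) e.

Definition locally_inverse : Prop :=
  regular /\ forall e, idem e -> inverse_on (local_sub e).

Inductive idem_gen : S -> Prop :=
| ig_idem e : idem e -> idem_gen e
| ig_mul x y : idem_gen x -> idem_gen y -> idem_gen (op x y).

Definition completely_regular_on (P : S -> Prop) : Prop :=
  forall a, P a -> exists x, P x /\ inverse_of a x /\ op a x = op x a.

Definition E_solid : Prop := completely_regular_on idem_gen.

Definition nat_le (s t : S) : Prop :=
  exists e f, idem e /\ idem f /\ s = op e t /\ s = op t f.

Definition subsemigroup (P : S -> Prop) : Prop :=
  forall x y, P x -> P y -> P (op x y).

(** simple: any two elements generate the same two-sided ideal within P *)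
Definition simple_on (P : S -> Prop) : Prop :=
  forall a b, P a -> P b ->
    b = a \/ (exists x, P x /\ b = op x a) \/ (exists y, P y /\ b = op a y)
    \/ (exists x y, P x /\ P y /\ b = op (op x a) y).

Definition primitive_on (P : S -> Prop) (f : S) : Prop :=
  P f /\ idem f /\
  forall g, P g -> idem g -> op g f = g -> op f g = g -> g = f.

Definition completely_simple_on (P : S -> Prop) : Prop :=
  subsemigroup P /\ simple_on P /\ exists f, primitive_on P f.

End SemigroupDefs.

Definition homomorphism (S T : semigroup) (phi : S -> T) : Prop :=
  forall x y, phi (op x y) = op (phi x) (phi y).

Definition surjective (S T : semigroup) (phi : S -> T) : Prop :=
  forall t, exists s, phi s = t.

Record arrow (S T : Type) := Arr { src : T; lab : S; tgt : T }.

Section Derived.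
Variables (S T : semigroup) (phi : S -> T) (Tinv : T -> T).

Definition is_arrow (a : arrow S T) : Prop :=
  op (src a) (phi (lab a)) = tgt a /\ op (tgt a) (Tinv (phi (lab a))) = src a.

Definition comp (a b : arrow S T) : arrow S T :=
  Arr (src a) (op (lab a) (lab b)) (tgt b).

Definition stable (a : arrow S T) : Prop :=
  phi (lab a) = op (Tinv (src a)) (tgt a).

Definition arr_le (a b : arrow S T) : Prop :=
  src a = src b /\ tgt a = tgt b /\ @nat_le S (lab a) (lab b).

Definition is_hat (h a : arrow S T) : Prop :=
  is_arrow h /\ stable h /\ arr_le h a.

Definition arr_inverse (a a' : arrow S T) : Prop :=
  src a' = tgt a /\ tgt a' = src a /\ @inverse_of S (lab a) (lab a').

(** sandwich set S(e,f) in the loop semigroup C(gamma,gamma) *)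
Definition loop (gamma : T) (x : arrow S T) : Prop :=
  is_arrow x /\ src x = gamma /\ tgt x = gamma.

Definition in_sandwich (gamma : T) (e f g : arrow S T) : Prop :=
  loop gamma g /\ comp g g = g /\ comp g e = g /\ comp f g = g /\
  comp (comp e g) f = comp e f.

(** [w] = (b ⋏ a), for alpha(b) = omega(a) = gamma: the element of
    S(a' o a, b o b') for inverses a', b' of a, b *)
Definition is_wedge (w b a : arrow S T) : Prop :=
  exists a' b', is_arrow a' /\ is_arrow b' /\ arr_inverse a a' /\ arr_inverse b b' /\
    in_sandwich (tgt a) (comp a' a) (comp b b') w.

End Derived.

Arguments homomorphism {S T} phi.
Arguments surjective {S T} phi.
Arguments is_arrow {S T} phi Tinv a.
Arguments stable {S T} phi Tinv a.
Arguments is_hat {S T} phi Tinv h a.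
Arguments is_wedge {S T} phi Tinv w b a.
Arguments comp {S T} a b.
Arguments inverse_of {S} x y.
Arguments idem {S} e.
Arguments completely_simple_on {S} P.

(* The hat of an arrow is unique: two elements [t1, t2 <= s] with the same
   image under [phi] coincide, since for an inverse [s'] of [s] the products
   [t1 s'], [t2 s'] are idempotents of the local submonoid [ss' S ss'], hence
   commute (local inverseness), and lie in one completely simple class, whose
   idempotents are primitive.  Then (1) is immediate and (2) follows from the
   compatibility of the natural order with multiplication.  For (3), if
   [w in S(e, f)] is the sandwich element of [a], [b] and [e' <= e], [f' <= f]
   are the corresponding idempotents of the hats, then [f' w e'] lies in
   [S(e', f')] and below [w]; in [T] the image of the new sandwich element is
   the idempotent [Tinv β ⋆ β] of the common vertex [β], so it is stable. *)


Set Implicit Arguments.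

Ltac assoc := repeat rewrite opA.
Ltac assoc_in H := repeat rewrite opA in H.

(* Rewriting modulo associativity: for [H : L = R] between left-nested
   products, [L] also occurs inside a longer left-nested product as
   [x ⋆ L], so [H] is tried both as is and as [forall x, x ⋆ L = x ⋆ R]. *)
Ltac with_prefix_form H tac :=
  let H' := fresh "H" in
  match type of H with ?L = ?R =>
    assert (H' : forall x, op x L = op x R) by (intro; rewrite H; reflexivity);
    repeat setoid_rewrite opA in H'; tac H'; clear H' end.

Ltac rewrite_assoc H :=
  with_prefix_form H ltac:(fun H' => first [rewrite H | rewrite H']).

Ltac rewrite_assoc_in H G :=
  with_prefix_form H ltac:(fun H' => first [rewrite H in G | rewrite H' in G]).

Ltac rewrite_assoc_rev H :=
  let H' := fresh "H" in pose proof (eq_sym H) as H'; rewrite_assoc H'; clear H'.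

Section Semigroup.
Variable S : semigroup.
Local Infix "⋆" := (@op S) (at level 40, left associativity).
Local Notation nle := (nat_le S).

Lemma inverse_of_sym (x y : S) : inverse_of x y -> inverse_of y x.
Proof. intros [H1 H2]; split; assumption. Qed.

Lemma idem_inverse_mul (x x' : S) : inverse_of x x' -> idem (x ⋆ x') /\ idem (x' ⋆ x).
Proof.
  intros [H1 H2]; unfold idem; split; assoc.
  - rewrite_assoc H1; reflexivity.
  - rewrite_assoc H2; reflexivity.
Qed.

Section InverseOn.
Variable P : S -> Prop.
Hypotheses (HPmul : subsemigroup S P) (HPinv : inverse_on S P).

Lemma inverse_on_idem_mul g h : P g -> P h -> idem g -> idem h -> idem (g ⋆ h).
Proof.
  intros Pg Ph Ig Ih. unfold idem in *.
  destruct (HPinv (HPmul Pg Ph)) as [x [[Px [H1 H2]] Ux]].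
  assoc_in H1. assoc_in H2.
  (* [h x g] is also an inverse of [g h] in [P], so it is [x] *)
  assert (Ex : x = h ⋆ x ⋆ g).
  { apply Ux. split; [apply HPmul; [apply HPmul|]; auto|split].
    - assoc. rewrite_assoc Ih. rewrite_assoc Ig. rewrite_assoc H1. reflexivity.
    - assoc. rewrite_assoc Ig. rewrite_assoc Ih. rewrite_assoc H2. reflexivity. }
  assert (Exg : x ⋆ g = x) by (rewrite Ex at 1; rewrite_assoc Ig; now rewrite <- Ex).
  assert (Ehx : h ⋆ x = x) by (rewrite Ex at 1; assoc; rewrite_assoc Ih; now rewrite <- Ex).
  assert (Ix : x ⋆ x = x).
  { transitivity (x ⋆ g ⋆ (h ⋆ x)); [now rewrite Ehx, Exg|assoc; exact H2]. }
  (* both [g h] and [x] are inverses of [x] in [P] *)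
  destruct (HPinv Px) as [y [_ Uy]].
  assert (E1 : y = g ⋆ h) by (apply Uy; split; [auto|apply inverse_of_sym; split; assoc; assumption]).
  assert (E2 : y = x) by (apply Uy; split; [auto|split; rewrite ?Ix; auto]).
  rewrite <- E1, E2. exact Ix.
Qed.

Lemma inverse_on_idem_comm g h : P g -> P h -> idem g -> idem h -> g ⋆ h = h ⋆ g.
Proof.
  intros Pg Ph Ig Ih.
  pose proof (inverse_on_idem_mul Pg Ph Ig Ih) as Igh.
  pose proof (inverse_on_idem_mul Ph Pg Ih Ig) as Ihg.
  unfold idem in *. assoc_in Igh. assoc_in Ihg.
  destruct (HPinv (HPmul Pg Ph)) as [y [_ Uy]].
  assert (E1 : y = g ⋆ h) by (apply Uy; split; [auto|split; assoc; rewrite ?Igh; auto]).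
  assert (E2 : y = h ⋆ g).
  { apply Uy. split; [auto|split]; assoc.
    - rewrite_assoc Ih. rewrite_assoc Ig. rewrite_assoc Igh. reflexivity.
    - rewrite_assoc Ig. rewrite_assoc Ih. rewrite_assoc Ihg. reflexivity. }
  congruence.
Qed.

End InverseOn.

Lemma local_sub_mul (e : S) : subsemigroup S (local_sub S e).
Proof. intros x y [a ->] [b ->]. exists (a ⋆ e ⋆ e ⋆ b). assoc. reflexivity. Qed.

Lemma locally_inverse_idem_comm (HSli : locally_inverse S) (e g h : S) :
  idem e -> idem g -> idem h -> e ⋆ g = g -> g ⋆ e = g -> e ⋆ h = h -> h ⋆ e = h ->
  g ⋆ h = h ⋆ g.
Proof.
  intros Ie Ig Ih Heg Hge Heh Hhe.
  apply (inverse_on_idem_comm (local_sub_mul (e := e)) (proj2 HSli e Ie)); auto.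
  - exists g. now rewrite Heg, Hge.
  - exists h. now rewrite Heh, Hhe.
Qed.

Lemma nat_le_inverse (y x x' : S) : nle y x -> inverse_of x x' ->
  y ⋆ x' ⋆ x = y /\ x ⋆ x' ⋆ y = y /\ y ⋆ x' ⋆ y = y.
Proof.
  intros [e [f [Ie [If [Hy1 Hy2]]]]] [Hx1 Hx2]. unfold idem in *.
  split; [|split].
  - rewrite Hy1. assoc. rewrite_assoc Hx1. reflexivity.
  - rewrite Hy2. assoc. rewrite_assoc Hx1. reflexivity.
  - rewrite Hy1 at 1. rewrite Hy2 at 1. assoc. rewrite_assoc Hx1.
    rewrite <- Hy1, Hy2. rewrite_assoc If. reflexivity.
Qed.

Lemma nat_le_of_idem (v w : S) : idem v -> w ⋆ v = v -> v ⋆ w = v -> nle v w.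
Proof. intros Iv H1 H2. exists v, v. auto. Qed.

Lemma nat_le_mul_idem_l (x x' k : S) :
  inverse_of x x' -> idem k -> x ⋆ x' ⋆ k = k -> nle (k ⋆ x) x.
Proof.
  intros [Hx1 Hx2] Ik H. unfold idem in Ik. exists k, (x' ⋆ k ⋆ x).
  repeat split; unfold idem; auto; assoc.
  - rewrite_assoc H. rewrite_assoc Ik. reflexivity.
  - rewrite_assoc H. reflexivity.
Qed.

Lemma nat_le_mul_idem_r (x x' k : S) :
  inverse_of x x' -> idem k -> k ⋆ x' ⋆ x = k -> nle (x ⋆ k) x.
Proof.
  intros [Hx1 Hx2] Ik H. unfold idem in Ik. exists (x ⋆ k ⋆ x'), k.
  repeat split; unfold idem; auto; assoc.
  - rewrite_assoc H. rewrite_assoc Ik. reflexivity.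
  - rewrite_assoc H. reflexivity.
Qed.

Section Regular.
Hypothesis Hreg : regular S.

Lemma nat_le_refl (x : S) : nle x x.
Proof.
  destruct (Hreg x) as [x' Hx']. destruct (idem_inverse_mul Hx') as [I1 I2].
  destruct Hx' as [H1 _]. exists (x ⋆ x'), (x' ⋆ x).
  repeat split; auto. assoc. now rewrite H1.
Qed.

Lemma nat_le_trans (y x z : S) : nle y x -> nle x z -> nle y z.
Proof.
  intros Hyx Hxz.
  destruct (Hreg x) as [x' Hx']. destruct (Hreg z) as [z' Hz'].
  destruct (nat_le_inverse Hyx Hx') as [A1 [A2 A3]].
  destruct (nat_le_inverse Hxz Hz') as [B1 [B2 B3]].
  destruct Hx' as [_ Hx2].
  assert (C1 : y ⋆ z' ⋆ z = y) by (rewrite <- A1 at 1; assoc; rewrite_assoc B1; exact A1).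
  assert (C2 : z ⋆ z' ⋆ y = y) by (rewrite <- A2 at 1; assoc; rewrite_assoc B2; exact A2).
  assert (C3 : y ⋆ z' ⋆ y = y).
  { rewrite <- A1 at 1. rewrite <- A2 at 2. assoc.
    rewrite_assoc B3. rewrite_assoc Hx2. exact A3. }
  exists (y ⋆ z'), (z' ⋆ y). unfold idem. repeat split; assoc.
  - rewrite_assoc C3. reflexivity.
  - rewrite_assoc C3. reflexivity.
  - now rewrite C1.
  - now rewrite C2.
Qed.

End Regular.

Section LocallyInverse.
Hypothesis HSli : locally_inverse S.

(* With [x = s u], the idempotent [k = (x x' s s') (t s')] of [s s' S s s']
   satisfies [k x = t u] and [x x' k = k]. *)
Lemma nat_le_mulr (t s u : S) : nle t s -> nle (t ⋆ u) (s ⋆ u).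
Proof.
  intros Hts.
  destruct (proj1 HSli s) as [s' Hs']. destruct (nat_le_inverse Hts Hs') as [A1 [A2 A3]].
  destruct (idem_inverse_mul Hs') as [Ie _]. destruct Hs' as [Hs1 Hs2].
  assert (Hex : s ⋆ s' ⋆ (s ⋆ u) = s ⋆ u) by (assoc; rewrite_assoc Hs1; reflexivity).
  destruct (proj1 HSli (s ⋆ u)) as [x' [Hx1 Hx2]].
  set (x := s ⋆ u) in *. assert (Hxd : x = s ⋆ u) by reflexivity. clearbody x.
  assert (Ik : idem (t ⋆ s')) by (unfold idem; assoc; rewrite_assoc A3; reflexivity).
  assert (Im : idem (x ⋆ x' ⋆ (s ⋆ s'))).
  { unfold idem; assoc; rewrite_assoc Hex; rewrite_assoc Hx1; reflexivity. }
  assert (Hc : (x ⋆ x' ⋆ (s ⋆ s')) ⋆ (t ⋆ s') = (t ⋆ s') ⋆ (x ⋆ x' ⋆ (s ⋆ s'))).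
  { apply (locally_inverse_idem_comm HSli Ie Im Ik); assoc.
    - rewrite_assoc Hex. reflexivity.
    - rewrite_assoc Hs1. reflexivity.
    - rewrite_assoc A2. reflexivity.
    - rewrite_assoc A1. reflexivity. }
  assoc_in Hc. unfold idem in Im, Ik. assoc_in Im. assoc_in Ik.
  assert (E : (x ⋆ x' ⋆ (s ⋆ s') ⋆ (t ⋆ s')) ⋆ x = t ⋆ u).
  { assoc. rewrite_assoc Hc. rewrite_assoc Hex. rewrite_assoc Hx1.
    rewrite Hxd. assoc. rewrite_assoc A1. reflexivity. }
  rewrite <- E. apply nat_le_mul_idem_l with x'.
  - split; assumption.
  - unfold idem. assoc. rewrite_assoc_rev Hc. rewrite_assoc Im. rewrite_assoc Ik. reflexivity.
  - assoc. rewrite_assoc Hx1. reflexivity.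
Qed.

Lemma nat_le_mull (t u v : S) : nle u v -> nle (t ⋆ u) (t ⋆ v).
Proof.
  intros Huv.
  destruct (proj1 HSli v) as [v' Hv']. destruct (nat_le_inverse Huv Hv') as [A1 [A2 A3]].
  destruct (idem_inverse_mul Hv') as [_ Ie]. destruct Hv' as [Hv1 Hv2].
  assert (Hxe : t ⋆ v ⋆ (v' ⋆ v) = t ⋆ v) by (assoc; rewrite_assoc Hv1; reflexivity).
  destruct (proj1 HSli (t ⋆ v)) as [x' [Hx1 Hx2]].
  set (x := t ⋆ v) in *. assert (Hxd : x = t ⋆ v) by reflexivity. clearbody x. assoc_in Hxe.
  assert (Ik : idem (v' ⋆ u)) by (unfold idem; assoc; rewrite_assoc A3; reflexivity).
  assert (Im : idem (v' ⋆ v ⋆ (x' ⋆ x))).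
  { unfold idem; assoc; rewrite_assoc Hxe; rewrite_assoc Hx1; reflexivity. }
  assert (Hc : (v' ⋆ u) ⋆ (v' ⋆ v ⋆ (x' ⋆ x)) = (v' ⋆ v ⋆ (x' ⋆ x)) ⋆ (v' ⋆ u)).
  { apply (locally_inverse_idem_comm HSli Ie Ik Im); assoc.
    - rewrite_assoc A2. reflexivity.
    - rewrite_assoc A1. reflexivity.
    - rewrite_assoc Hv1. reflexivity.
    - rewrite_assoc Hxe. reflexivity. }
  assoc_in Hc. unfold idem in Im, Ik. assoc_in Im. assoc_in Ik.
  assert (E : x ⋆ (v' ⋆ u ⋆ (v' ⋆ v ⋆ (x' ⋆ x))) = t ⋆ u).
  { assoc. rewrite_assoc Hc. rewrite_assoc Hxe. rewrite_assoc Hx1.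
    rewrite Hxd. assoc. rewrite_assoc A2. reflexivity. }
  rewrite <- E. apply nat_le_mul_idem_r with x'.
  - split; assumption.
  - unfold idem. assoc. rewrite_assoc_rev Hc. rewrite_assoc Ik. rewrite_assoc Im. reflexivity.
  - assoc. rewrite_assoc Hx2. reflexivity.
Qed.

Lemma nat_le_mul (s1 s t1 t : S) : nle s1 s -> nle t1 t -> nle (s1 ⋆ t1) (s ⋆ t).
Proof.
  intros H1 H2. apply nat_le_trans with (s1 ⋆ t); [exact (proj1 HSli)| |].
  - apply nat_le_mull; assumption.
  - apply nat_le_mulr; assumption.
Qed.

End LocallyInverse.

End Semigroup.

Section Sandwich.
Variable S : semigroup.
Local Infix "⋆" := (@op S) (at level 40, left associativity).

Definition sandwich (e f h : S) : Prop :=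
  idem h /\ h ⋆ e = h /\ f ⋆ h = h /\ e ⋆ h ⋆ f = e ⋆ f.

Lemma sandwich_diag (e h : S) : idem e -> sandwich e e h -> h = e.
Proof.
  intros Ie [_ [He [He' Hs]]].
  rewrite <- Ie, <- Hs, <- He at 1. rewrite <- He' at 1. assoc. reflexivity.
Qed.

(* [S(e, f)] only depends on the L-class of [e] and the R-class of [f]. *)
Lemma sandwich_change (e e' f f' h : S) :
  e' ⋆ e = e' -> e ⋆ e' = e -> f ⋆ f' = f' -> f' ⋆ f = f ->
  sandwich e f h -> sandwich e' f' h.
Proof.
  intros He'e Hee' Hff' Hf'f [Ih [He [Hf Hs]]]. assoc_in Hs.
  repeat split; auto.
  - rewrite <- He at 1. assoc. rewrite_assoc Hee'. exact He.
  - rewrite <- Hf at 1. assoc. rewrite_assoc Hf'f. exact Hf.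
  - rewrite <- He'e, <- Hff'. assoc. rewrite_assoc Hs. reflexivity.
Qed.

Section LocallyInverse.
Hypothesis HSli : locally_inverse S.

Lemma sandwich_absorb (e f h1 h2 : S) : idem e -> idem f ->
  sandwich e f h1 -> sandwich e f h2 -> h1 ⋆ h2 = h1.
Proof.
  intros Ie If [Ih1 [He1 [Hf1 Hs1]]] [Ih2 [He2 [Hf2 Hs2]]]. unfold idem in *.
  assert (P1 : h1 ⋆ h2 ⋆ h1 = h1).
  { transitivity (h1 ⋆ e ⋆ h2 ⋆ f ⋆ h1).
    - assoc. rewrite_assoc He1. rewrite_assoc Hf1. reflexivity.
    - rewrite_assoc Hs2. rewrite_assoc He1. rewrite_assoc Hf1. exact Ih1. }
  assert (C : (e ⋆ h1) ⋆ (e ⋆ h2) = (e ⋆ h2) ⋆ (e ⋆ h1)).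
  { apply (locally_inverse_idem_comm HSli (e := e)); unfold idem; assoc;
      repeat first [rewrite_assoc Ie | rewrite_assoc He1 | rewrite_assoc He2
                   | rewrite_assoc Ih1 | rewrite_assoc Ih2]; reflexivity. }
  assoc_in C. rewrite_assoc_in He1 C. rewrite_assoc_in He2 C.
  transitivity (h1 ⋆ e ⋆ h1 ⋆ h2); [rewrite_assoc He1; rewrite_assoc Ih1; reflexivity|].
  rewrite_assoc C. rewrite_assoc He1. exact P1.
Qed.

Lemma sandwich_unique (e f h1 h2 : S) : idem e -> idem f ->
  sandwich e f h1 -> sandwich e f h2 -> h1 = h2.
Proof.
  intros Ie If H1 H2.
  pose proof (sandwich_absorb Ie If H1 H2) as A12.
  pose proof (sandwich_absorb Ie If H2 H1) as A21.
  destruct H1 as [Ih1 [He1 [Hf1 Hs1]]], H2 as [Ih2 [He2 [Hf2 Hs2]]]. unfold idem in *.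
  assert (C : (h1 ⋆ f) ⋆ (h2 ⋆ f) = (h2 ⋆ f) ⋆ (h1 ⋆ f)).
  { apply (locally_inverse_idem_comm HSli (e := f)); unfold idem; assoc;
      repeat first [rewrite_assoc If | rewrite_assoc Hf1 | rewrite_assoc Hf2
                   | rewrite_assoc Ih1 | rewrite_assoc Ih2]; reflexivity. }
  assoc_in C.
  assert (D : h1 ⋆ f = h2 ⋆ f).
  { transitivity (h1 ⋆ f ⋆ h2 ⋆ f); [rewrite_assoc Hf2; now rewrite A12|].
    rewrite C. rewrite_assoc Hf1. now rewrite A21. }
  rewrite <- A12, <- Hf2 at 1. assoc. rewrite D. rewrite_assoc Hf2. exact Ih2.
Qed.

Section Restrict.
Variables e e' f f' w : S.
Hypotheses (Ie : idem e) (Ie' : idem e') (If : idem f) (If' : idem f')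
  (He'e : e' ⋆ e = e') (Hee' : e ⋆ e' = e') (Hf'f : f' ⋆ f = f') (Hff' : f ⋆ f' = f')
  (Hw : sandwich e f w).

(* the idempotents [e w], [e'] of [eSe] commute, and so do [w f], [f'] in [fSf] *)
Lemma sandwich_restrict_comm : e ⋆ w ⋆ e' = e' ⋆ w /\ w ⋆ f' = f' ⋆ w ⋆ f.
Proof.
  destruct Hw as [Iw [Hwe [Hfw _]]]. unfold idem in *.
  assert (C1 : (e ⋆ w) ⋆ e' = e' ⋆ (e ⋆ w)).
  { apply (locally_inverse_idem_comm HSli Ie); unfold idem; assoc;
      repeat first [rewrite_assoc Ie | rewrite_assoc Ie' | rewrite_assoc Hwe
                   | rewrite_assoc Iw | rewrite_assoc Hee' | rewrite_assoc He'e]; reflexivity. }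
  assert (C2 : (w ⋆ f) ⋆ f' = f' ⋆ (w ⋆ f)).
  { apply (locally_inverse_idem_comm HSli If); unfold idem; assoc;
      repeat first [rewrite_assoc If | rewrite_assoc If' | rewrite_assoc Hfw
                   | rewrite_assoc Iw | rewrite_assoc Hff' | rewrite_assoc Hf'f]; reflexivity. }
  assoc_in C1. assoc_in C2. rewrite_assoc_in He'e C1. rewrite_assoc_in Hff' C2.
  split; assumption.
Qed.

Lemma sandwich_restrict_absorb : w ⋆ e' ⋆ w = w ⋆ e' /\ w ⋆ f' ⋆ w = f' ⋆ w.
Proof.
  destruct sandwich_restrict_comm as [C1 C2].
  destruct Hw as [Iw [Hwe [Hfw _]]]. unfold idem in *. split.
  - rewrite_assoc_rev C1. rewrite_assoc Hwe. rewrite_assoc Iw. reflexivity.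
  - rewrite C2. rewrite_assoc Hfw. rewrite_assoc Iw. reflexivity.
Qed.

Lemma sandwich_restrict : sandwich e' f' (f' ⋆ w ⋆ e').
Proof.
  destruct sandwich_restrict_comm as [C1 C2].
  destruct sandwich_restrict_absorb as [W1 W2].
  destruct Hw as [Iw [Hwe [Hfw Hs]]]. unfold idem in *. assoc_in Hs.
  assert (X1 : e' ⋆ w ⋆ e' = e' ⋆ w).
  { rewrite <- He'e at 1. assoc. rewrite_assoc C1. rewrite_assoc Ie'. reflexivity. }
  assert (X2 : f' ⋆ w ⋆ f' = w ⋆ f').
  { rewrite <- Hff' at 2. assoc. rewrite_assoc_rev C2. rewrite_assoc If'. reflexivity. }
  assert (C : (f' ⋆ w) ⋆ (w ⋆ e') = (w ⋆ e') ⋆ (f' ⋆ w)).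
  { apply (locally_inverse_idem_comm HSli Iw); unfold idem; assoc;
      repeat first [rewrite_assoc Iw | rewrite_assoc W1 | rewrite_assoc W2
                   | rewrite_assoc If' | rewrite_assoc Ie']; reflexivity. }
  assoc_in C. rewrite_assoc_in Iw C.
  unfold sandwich, idem. repeat split; assoc.
  - rewrite_assoc_rev C. rewrite_assoc If'. rewrite_assoc Ie'. reflexivity.
  - rewrite_assoc Ie'. reflexivity.
  - rewrite_assoc If'. reflexivity.
  - rewrite_assoc C. rewrite_assoc X1. rewrite_assoc W2. rewrite_assoc X2.
    rewrite <- He'e, <- Hff'. assoc. rewrite_assoc Hs. reflexivity.
Qed.

Lemma sandwich_restrict_le : nat_le S (f' ⋆ w ⋆ e') w.
Proof.
  destruct sandwich_restrict_absorb as [W1 W2].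
  apply nat_le_of_idem; [apply sandwich_restrict|assoc..].
  - rewrite_assoc W2. reflexivity.
  - rewrite_assoc W1. reflexivity.
Qed.

End Restrict.

Lemma sandwich_nat_le (s s' s1 s1' t t' t1 t1' w v : S) :
  inverse_of s s' -> inverse_of t t' -> inverse_of s1 s1' -> inverse_of t1 t1' ->
  nat_le S s1 s -> nat_le S t1 t ->
  sandwich (s' ⋆ s) (t ⋆ t') w -> sandwich (s1' ⋆ s1) (t1 ⋆ t1') v -> nat_le S v w.
Proof.
  intros Is It Is1 It1 Le1 Le2 Hw Hv.
  destruct (nat_le_inverse Le1 Is) as [A1 [A2 A3]].
  destruct (nat_le_inverse Le2 It) as [B1 [B2 B3]].
  destruct (idem_inverse_mul Is) as [_ Ie]. destruct (idem_inverse_mul It) as [If _].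
  destruct Is as [_ Hs2], It as [_ Ht2], Is1 as [Hs1 _], It1 as [Ht1 _].
  assert (Ie' : idem (s' ⋆ s1)) by (unfold idem; assoc; rewrite_assoc A3; reflexivity).
  assert (If' : idem (t1 ⋆ t')) by (unfold idem; assoc; rewrite_assoc B3; reflexivity).
  assert (He'e : s' ⋆ s1 ⋆ (s' ⋆ s) = s' ⋆ s1) by (assoc; rewrite_assoc A1; reflexivity).
  assert (Hee' : s' ⋆ s ⋆ (s' ⋆ s1) = s' ⋆ s1) by (assoc; rewrite_assoc Hs2; reflexivity).
  assert (Hf'f : t1 ⋆ t' ⋆ (t ⋆ t') = t1 ⋆ t') by (assoc; rewrite_assoc Ht2; reflexivity).
  assert (Hff' : t ⋆ t' ⋆ (t1 ⋆ t') = t1 ⋆ t') by (assoc; rewrite_assoc B2; reflexivity).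
  assert (Hv' : sandwich (s' ⋆ s1) (t1 ⋆ t') v).
  { apply (sandwich_change (e := s1' ⋆ s1) (f := t1 ⋆ t1')); auto; assoc.
    - rewrite_assoc Hs1. reflexivity.
    - rewrite_assoc A3. reflexivity.
    - rewrite_assoc Ht1. reflexivity.
    - rewrite_assoc B3. reflexivity. }
  rewrite (sandwich_unique Ie' If' Hv' (sandwich_restrict Ie Ie' If If' He'e Hee' Hf'f Hff' Hw)).
  exact (sandwich_restrict_le Ie Ie' If If' He'e Hee' Hf'f Hff' Hw).
Qed.
End LocallyInverse.
End Sandwich.

Lemma sandwich_morph (S T : semigroup) (phi : S -> T) (e f h : S) :
  homomorphism phi -> sandwich S e f h -> sandwich T (phi e) (phi f) (phi h).
Proof.
  intros Hhom [Ih [He [Hf Hs]]]. unfold sandwich, idem in *.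
  rewrite <- !Hhom. repeat split; congruence.
Qed.

Section CompletelySimple.
Variables (S : semigroup) (P : S -> Prop).
Local Infix "⋆" := (@op S) (at level 40, left associativity).

Lemma simple_on_factor (e f : S) : simple_on S P -> P e -> P f -> idem e -> idem f ->
  exists x y, P x /\ P y /\ e = x ⋆ f ⋆ y.
Proof.
  intros Hsimp Pe Pf Ie If. unfold idem in *.
  destruct (Hsimp f e Pf Pe) as [E|[[x [Px E]]|[[y [Py E]]|[x [y [Px [Py E]]]]]]].
  - exists f, f. subst e. repeat split; auto. now rewrite !If.
  - exists x, e. repeat split; auto. rewrite <- Ie at 1. now rewrite E at 1.
  - exists e, y. repeat split; auto. rewrite <- Ie at 1. rewrite E at 2. now assoc.
  - exists x, y. auto.
Qed.

(* Write [e = x f y] with [f] primitive: [f y e g e x f] is an idempotent of [P]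
   below [f], hence equal to [f], and [g = (e x f) (f y e g e x f) (f y e) = e]. *)
Lemma completely_simple_idem_le (g e : S) : completely_simple_on P ->
  P g -> P e -> idem g -> idem e -> g ⋆ e = g -> e ⋆ g = g -> g = e.
Proof.
  intros [Hmul [Hsimp [f [Pf [If Hprim]]]]] Pg Pe Ig Ie Hge Heg.
  destruct (simple_on_factor Hsimp Pe Pf Ie If) as [x [y [Px [Py E]]]].
  unfold idem in *.
  assert (Hf : f ⋆ y ⋆ e ⋆ g ⋆ (e ⋆ x ⋆ f) = f).
  { apply Hprim.
    - repeat apply Hmul; auto.
    - unfold idem. assoc.
      repeat (rewrite_assoc Ie || rewrite_assoc If || rewrite_assoc_rev E
              || rewrite_assoc Hge || rewrite_assoc Heg || rewrite_assoc Ig).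
      reflexivity.
    - assoc. rewrite_assoc If. reflexivity.
    - assoc. now rewrite If. }
  transitivity ((e ⋆ x ⋆ f) ⋆ (f ⋆ y ⋆ e ⋆ g ⋆ (e ⋆ x ⋆ f)) ⋆ (f ⋆ y ⋆ e)).
  - assoc.
    repeat (rewrite_assoc Ie || rewrite_assoc If || rewrite_assoc_rev E
            || rewrite_assoc Hge || rewrite_assoc Heg || rewrite_assoc Ig).
    reflexivity.
  - rewrite Hf. assoc. repeat (rewrite_assoc Ie || rewrite_assoc If || rewrite_assoc_rev E).
    reflexivity.
Qed.

End CompletelySimple.

Section InverseSemigroup.
Variables (T : semigroup) (Tinv : T -> T).
Hypotheses (HTinv : inverse_semigroup T) (HTinvx : forall x : T, inverse_of x (Tinv x)).
Local Infix "⋆" := (@op T) (at level 40, left associativity).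

Lemma inverse_unique (x y : T) : inverse_of x y -> y = Tinv x.
Proof.
  intros H. destruct (@HTinv x I) as [z [_ Uz]].
  rewrite <- (Uz y (conj I H)). apply Uz. split; auto.
Qed.

Lemma inverse_invK (x : T) : Tinv (Tinv x) = x.
Proof. symmetry. apply inverse_unique, inverse_of_sym, HTinvx. Qed.

Lemma inverse_mul (x y : T) : Tinv (x ⋆ y) = Tinv y ⋆ Tinv x.
Proof.
  symmetry. apply inverse_unique.
  destruct (idem_inverse_mul (HTinvx x)) as [_ Ix]. destruct (idem_inverse_mul (HTinvx y)) as [Iy _].
  assert (C : (y ⋆ Tinv y) ⋆ (Tinv x ⋆ x) = (Tinv x ⋆ x) ⋆ (y ⋆ Tinv y)).
  { apply (inverse_on_idem_comm (P := fun _ => True)); auto. now intros. }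
  destruct (HTinvx x) as [Hx1 Hx2]. destruct (HTinvx y) as [Hy1 Hy2].
  assoc_in C. split; assoc.
  - rewrite_assoc C. rewrite_assoc Hx1. rewrite_assoc Hy1. reflexivity.
  - rewrite_assoc_rev C. rewrite_assoc Hy2. rewrite_assoc Hx2. reflexivity.
Qed.

End InverseSemigroup.

Section Derived.
Variables (S T : semigroup) (phi : S -> T) (Tinv : T -> T).
Hypotheses (HSli : locally_inverse S) (Hhom : homomorphism phi)
  (HTinv : inverse_semigroup T) (HTinvx : forall x : T, inverse_of x (Tinv x))
  (Hcs : forall e : T, idem e -> completely_simple_on (fun s : S => phi s = e)).
Local Infix "⋆" := (@op S) (at level 40, left associativity).

Lemma phi_inverse (s s' : S) : inverse_of s s' -> phi s' = Tinv (phi s).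
Proof.
  intros [H1 H2]. apply (inverse_unique Tinv HTinv HTinvx).
  split; rewrite <- !Hhom; f_equal; assumption.
Qed.

Lemma idem_comm_phi_absorb (x y : S) : idem x -> idem y -> x ⋆ y = y ⋆ x ->
  phi x = phi y -> x ⋆ y = x.
Proof.
  intros Ix Iy C Hp. unfold idem in Ix, Iy.
  assert (Ip : idem (phi x)) by (unfold idem; now rewrite <- Hhom, Ix).
  apply (completely_simple_idem_le (Hcs Ip)); unfold idem; auto.
  - rewrite Hhom, <- Hp. exact Ip.
  - transitivity (x ⋆ (y ⋆ x) ⋆ y); [now assoc|].
    rewrite <- C. assoc. rewrite_assoc Ix. rewrite_assoc Iy. reflexivity.
  - transitivity (x ⋆ (y ⋆ x)); [now assoc|]. rewrite <- C. assoc. rewrite_assoc Ix. reflexivity.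
  - assoc. rewrite_assoc Ix. reflexivity.
Qed.

Lemma local_idem_phi_inj (e u1 u2 : S) : idem e -> idem u1 -> idem u2 ->
  u1 ⋆ e = u1 -> e ⋆ u1 = u1 -> u2 ⋆ e = u2 -> e ⋆ u2 = u2 -> phi u1 = phi u2 -> u1 = u2.
Proof.
  intros Ie I1 I2 H1 H2 H3 H4 Hp.
  pose proof (locally_inverse_idem_comm HSli Ie I1 I2 H2 H1 H4 H3) as C.
  rewrite <- (idem_comm_phi_absorb I1 I2 C Hp), C.
  exact (idem_comm_phi_absorb I2 I1 (eq_sym C) (eq_sym Hp)).
Qed.

Lemma nat_le_phi_inj (t1 t2 s : S) : nat_le S t1 s -> nat_le S t2 s -> phi t1 = phi t2 -> t1 = t2.
Proof.
  intros H1 H2 Hp.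
  destruct (proj1 HSli s) as [s' Hs'].
  destruct (nat_le_inverse H1 Hs') as [A1 [A2 A3]]. destruct (nat_le_inverse H2 Hs') as [B1 [B2 B3]].
  destruct (idem_inverse_mul Hs') as [Ie _].
  assert (E : t1 ⋆ s' = t2 ⋆ s').
  { apply (local_idem_phi_inj Ie); unfold idem; assoc;
      repeat first [rewrite_assoc A1 | rewrite_assoc A2 | rewrite_assoc A3
                   | rewrite_assoc B1 | rewrite_assoc B2 | rewrite_assoc B3]; auto.
    now rewrite !Hhom, Hp. }
  rewrite <- A1, E. exact B1.
Qed.

Lemma hat_unique (h1 h2 a : arrow S T) :
  is_hat phi Tinv h1 a -> is_hat phi Tinv h2 a -> h1 = h2.
Proof.
  destruct h1 as [a1 l1 b1], h2 as [a2 l2 b2], a as [a0 l0 b0].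
  intros [_ [St1 [Hs1 [Ht1 Hl1]]]] [_ [St2 [Hs2 [Ht2 Hl2]]]].
  unfold stable in *; simpl in *. subst.
  f_equal. apply (nat_le_phi_inj Hl1 Hl2). congruence.
Qed.

Lemma is_hat_refl (h : arrow S T) : is_arrow phi Tinv h -> stable phi Tinv h -> is_hat phi Tinv h h.
Proof. intros Ah Sh. split; [|split; [|split; [|split]]]; auto. apply (nat_le_refl (proj1 HSli)). Qed.

Lemma is_arrow_comp (a b : arrow S T) : is_arrow phi Tinv a -> is_arrow phi Tinv b ->
  tgt a = src b -> is_arrow phi Tinv (comp a b).
Proof.
  intros [Aa1 Aa2] [Ab1 Ab2] Hab. unfold is_arrow, comp; simpl.
  rewrite Hhom, (inverse_mul Tinv HTinv HTinvx), !opA, Aa1, Hab. split; [exact Ab1|].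
  rewrite Ab2, <- Hab. exact Aa2.
Qed.

Lemma stable_comp (a b : arrow S T) : stable phi Tinv a -> is_arrow phi Tinv b ->
  tgt a = src b -> stable phi Tinv (comp a b).
Proof.
  intros Sa [Ab _] Hab. unfold stable, comp in *; simpl.
  rewrite Hhom, Sa, <- opA, Hab, Ab. reflexivity.
Qed.

Lemma is_hat_comp (a b ah bh : arrow S T) : tgt a = src b ->
  is_hat phi Tinv ah a -> is_hat phi Tinv bh b -> is_hat phi Tinv (comp ah bh) (comp a b).
Proof.
  intros Hab [Aah [Sah [Es1 [Et1 Le1]]]] [Abh [Sbh [Es2 [Et2 Le2]]]].
  assert (Hab' : tgt ah = src bh) by congruence.
  split; [|split]; [apply is_arrow_comp|apply stable_comp|]; auto.
  repeat split; simpl; auto. exact (nat_le_mul HSli Le1 Le2).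
Qed.

Lemma in_sandwich_lab (gamma : T) (e f g : arrow S T) :
  in_sandwich S T phi Tinv gamma e f g -> sandwich S (lab e) (lab f) (lab g).
Proof.
  intros [_ [Ig [He [Hf Hs]]]].
  apply (f_equal (@lab S T)) in Ig, He, Hf, Hs. repeat split; assumption.
Qed.

Lemma wedge_lab (w b a : arrow S T) : is_wedge phi Tinv w b a ->
  exists a' b', inverse_of (lab a) a' /\ inverse_of (lab b) b' /\
    sandwich S (a' ⋆ lab a) (lab b ⋆ b') (lab w) /\ loop S T phi Tinv (tgt a) w.
Proof.
  intros [a' [b' [_ [_ [[_ [_ Ia]] [[_ [_ Ib]] Hw]]]]]].
  exists (lab a'), (lab b').
  split; [exact Ia|split; [exact Ib|split; [exact (in_sandwich_lab Hw)|exact (proj1 Hw)]]].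
Qed.

Lemma stable_inv_mul (h : arrow S T) : is_arrow phi Tinv h -> stable phi Tinv h ->
  op (Tinv (phi (lab h))) (phi (lab h)) = op (Tinv (tgt h)) (tgt h).
Proof.
  destruct h as [al l be]. unfold is_arrow, stable. simpl. intros [A1 _] Sh.
  rewrite Sh in A1 |- *. assoc_in A1.
  rewrite (inverse_mul Tinv HTinv HTinvx), (inverse_invK Tinv HTinv HTinvx).
  assoc. rewrite_assoc A1. reflexivity.
Qed.

Lemma stable_mul_inv (h : arrow S T) : is_arrow phi Tinv h -> stable phi Tinv h ->
  op (phi (lab h)) (Tinv (phi (lab h))) = op (Tinv (src h)) (src h).
Proof.
  destruct h as [al l be]. unfold is_arrow, stable. simpl. intros [_ A2] Sh.
  rewrite Sh in A2 |- *.
  rewrite (inverse_mul Tinv HTinv HTinvx), (inverse_invK Tinv HTinv HTinvx) in A2 |- *.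
  assoc_in A2. assoc. rewrite_assoc A2. reflexivity.
Qed.

Lemma is_hat_wedge (a b ah bh w v : arrow S T) : tgt a = src b ->
  is_hat phi Tinv ah a -> is_hat phi Tinv bh b ->
  is_wedge phi Tinv w b a -> is_wedge phi Tinv v bh ah -> is_hat phi Tinv v w.
Proof.
  intros Hab [Aah [Sah [Es1 [Et1 Le1]]]] [Abh [Sbh [Es2 [Et2 Le2]]]] Hw Hv.
  destruct (wedge_lab Hw) as [s' [t' [Is [It [Hsw [_ [Sw Tw]]]]]]].
  destruct (wedge_lab Hv) as [s1' [t1' [Is1 [It1 [Hsv [Av [Sv Tv]]]]]]].
  split; [exact Av|split].
  - (* [phi] maps [v] into [S(i, i)] for the vertex idempotent [i], and [S(i, i) = {i}] *)
    unfold stable. rewrite Sv, Tv.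
    apply (sandwich_diag (proj2 (idem_inverse_mul (HTinvx (tgt ah))))).
    pose proof (sandwich_morph Hhom Hsv) as Hi.
    rewrite !Hhom, (phi_inverse Is1), (phi_inverse It1) in Hi.
    rewrite (stable_inv_mul Aah Sah), (stable_mul_inv Abh Sbh) in Hi.
    replace (src bh) with (tgt ah) in Hi by congruence. exact Hi.
  - repeat split; try congruence.
    exact (sandwich_nat_le HSli Is It Is1 It1 Le1 Le2 Hsw Hsv).
Qed.

End Derived.

Theorem lemma5p4 (S T : semigroup) (phi : S -> T) (Tinv : T -> T)
  (HSli : locally_inverse S) (HSes : E_solid S)
  (Hhom : homomorphism phi) (Hsurj : surjective phi)
  (HTinv : inverse_semigroup T) (HTinvx : forall x : T, inverse_of x (Tinv x))
  (Hcs : forall e : T, idem e -> completely_simple_on (fun s : S => phi s = e))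
  (a b : arrow S T) (Ha : is_arrow phi Tinv a) (Hb : is_arrow phi Tinv b)
  (Hab : tgt a = src b) :
  forall ah bh : arrow S T,
    is_hat phi Tinv ah a -> is_hat phi Tinv bh b ->
    (* (1) hat (hat a) = hat a *)
    (is_hat phi Tinv ah ah /\ forall x, is_hat phi Tinv x ah -> x = ah) /\
    (* (2) hat (a o b) = hat a o hat b *)
    (is_hat phi Tinv (comp ah bh) (comp a b) /\
     forall x, is_hat phi Tinv x (comp a b) -> x = comp ah bh) /\
    (* (3) hat (b ⋏ a) = (hat b ⋏ hat a) *)
    (forall w v, is_wedge phi Tinv w b a -> is_wedge phi Tinv v bh ah ->
       is_hat phi Tinv v w /\ forall wh, is_hat phi Tinv wh w -> wh = v).
Proof.
  intros ah bh Hah Hbh.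
  pose proof (hat_unique (Tinv := Tinv) HSli Hhom Hcs) as Huniq.
  assert (Hahah : is_hat phi Tinv ah ah) by (apply (is_hat_refl HSli); apply Hah).
  assert (Hcomp : is_hat phi Tinv (comp ah bh) (comp a b))
    by exact (is_hat_comp HSli Hhom HTinv HTinvx Hab Hah Hbh).
  split; [|split].
  - split; [exact Hahah|intros x Hx; exact (Huniq _ _ _ Hx Hahah)].
  - split; [exact Hcomp|intros x Hx; exact (Huniq _ _ _ Hx Hcomp)].
  - intros w v Hw Hv.
    assert (Hvw : is_hat phi Tinv v w)
      by exact (is_hat_wedge HSli Hhom HTinv HTinvx Hab Hah Hbh Hw Hv).
    split; [exact Hvw|intros wh Hwh; exact (Huniq _ _ _ Hwh Hvw)].
Qed.
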